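(* Consider the hybrid size-control closed loop (context) and assume $x(t)\in\mathcal M_n$ for all $t\ge0$. Let $\beta=\sqrt{2(1-\cos(2\pi/n))}$, $\gamma_m=\sin(m\pi/n)/\sin(\pi/n)$ (so that $\|x_{i+m}-x_i\|=\gamma_m\|x_{i+1}-x_i\|$ for $x\in\mathcal M_n$), $\Gamma=\sum_{m=1}^N k_m\gamma_m$ and $C=2\beta\Gamma$. Then $p_1(t)=\dots=p_n(t)=\bar p(t)$, on each interval $[\ell\tau,(\ell+1)\tau)$ one has $\dot p_i=C\sin(\alpha_s)(p_i-1)$ with $\alpha_s=\alpha_{s_0}f_s(p_i((\ell-1)\tau))$ constant, and consequently, writing $p_{i_\ell}:=p_i(\ell\tau)$, $$p_{i_{\ell+1}}=(p_{i_\ell}-1)\,e^{C\sin(\alpha_{s_0}f_s(p_{i_{\ell-1}}))\tau}+1 .$$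
   Context: $n\ge3$ robots, $x=(x_1^T,\dots,x_n^T)^T$, indices mod $n$; $e_z=(0,0,1)^T$; $R_\theta$ is counterclockwise rotation by $\theta$ about $e_z$; $L_m$ is the $n\times n$ circulant matrix with first row having $1$ in position 1, $-1$ in position $m+1$, zeros elsewhere. $\mathcal M_n$ is the set of $x$ with $x_{i+1}-x_i=R_{2\pi/n}(x_{i+2}-x_{i+1})$ ($i=1,\dots,n-2$) and $e_z^T(x_n-x_{n-1})=e_z^T(x_1-x_n)$. Size control: $\rho>0$; $p_i(x)=1-\|x_{i+1}-x_i\|/\rho$; $\bar p=\frac1n\sum_ip_i$; $f_s$ continuous odd, $pf_s(p)>0$ for $p\neq0$, $|f_s|\le1$, $f_s'(0)>a>0$; $\alpha_{s_0}>0$, $\tau>0$, $0<N<n-1$, $k_m>0$. Closed loop: $\dot x=-\sum_{m=1}^Nk_m(L_m\otimes R_{\alpha_m}+L_m^T\otimes R_{\alpha_m}^T)x$ on $[\ell\tau,(\ell+1)\tau)$, $\ell=0,1,\dots$, with $\alpha_m=m\pi/n+\alpha_{s_0}f_s(\bar p(x((\ell-1)\tau)))$ (for $\ell=0$ use $x(0)$). *)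

From Stdlib Require Import Reals.
Open Scope R_scope.

Definition V3 : Type := (R * R * R)%type.
Definition vx (v : V3) : R := fst (fst v).
Definition vy (v : V3) : R := snd (fst v).
Definition vz (v : V3) : R := snd v.
Definition mkV (a b c : R) : V3 := (a, b, c).
Definition vsub (u v : V3) : V3 := mkV (vx u - vx v) (vy u - vy v) (vz u - vz v).
Definition vadd (u v : V3) : V3 := mkV (vx u + vx v) (vy u + vy v) (vz u + vz v).
Definition vscale (a : R) (v : V3) : V3 := mkV (a * vx v) (a * vy v) (a * vz v).
Definition vnorm (v : V3) : R := sqrt (vx v ^ 2 + vy v ^ 2 + vz v ^ 2).

Definition rot (th : R) (v : V3) : V3 :=
  mkV (cos th * vx v - sin th * vy v) (sin th * vx v + cos th * vy v) (vz v).
Definition rotT (th : R) (v : V3) : V3 :=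
  mkV (cos th * vx v + sin th * vy v) (- sin th * vx v + cos th * vy v) (vz v).

Fixpoint vsum1 (g : nat -> V3) (N : nat) : V3 :=
  match N with O => mkV 0 0 0 | S N' => vadd (vsum1 g N') (g (S N')) end.
Fixpoint rsum1 (g : nat -> R) (N : nat) : R :=
  match N with O => 0 | S N' => rsum1 g N' + g (S N') end.
Fixpoint rsum0 (g : nat -> R) (n : nat) : R :=
  match n with O => 0 | S n' => rsum0 g n' + g n' end.

(* Configuration: robots indexed 0..n-1 (robot i here = robot i+1 of the paper);
   indices are taken mod n. *)
Definition Config : Type := nat -> V3.
Definition pos (n : nat) (x : Config) (i : nat) : V3 := x (i mod n).

Definition in_Mn (n : nat) (x : Config) : Prop :=
  (forall i, (i + 2 < n)%nat ->
     vsub (pos n x (i+1)) (pos n x i) =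
     rot (2 * PI / INR n) (vsub (pos n x (i+2)) (pos n x (i+1)))) /\
  vz (vsub (pos n x (n-1)) (pos n x (n-2))) = vz (vsub (pos n x 0) (pos n x (n-1))).

Definition p_i (n : nat) (rho : R) (x : Config) (i : nat) : R :=
  1 - vnorm (vsub (pos n x (i+1)) (pos n x i)) / rho.
Definition pbar (n : nat) (rho : R) (x : Config) : R :=
  / INR n * rsum0 (fun i => p_i n rho x i) n.

(* i-th block of  -sum_m k_m (L_m (x) R_{a_m} + L_m^T (x) R_{a_m}^T) x ;
   (L_m x)_i = x_i - x_{i+m},  (L_m^T x)_i = x_i - x_{i-m}. *)
Definition closed_loop_rhs (n N : nat) (k : nat -> R) (alpha : nat -> R)
    (x : Config) (i : nat) : V3 :=
  vscale (-1) (vsum1 (fun m =>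
     vscale (k m)
       (vadd (rot (alpha m) (vsub (pos n x i) (pos n x (i + m))))
             (rotT (alpha m) (vsub (pos n x i) (pos n x (i + (n - m))))))) N).

(* sampling time used on [l tau, (l+1) tau): (l-1) tau, and 0 for l = 0 *)
Definition sample_time (tau : R) (l : nat) : R :=
  match l with O => 0 | S l' => INR l' * tau end.

Definition cont_nonneg (f : R -> R) : Prop :=
  forall t, 0 <= t -> forall eps, eps > 0 -> exists d, d > 0 /\
    forall s, 0 <= s -> Rabs (s - t) < d -> Rabs (f s - f t) < eps.

Definition hybrid_solution (n N : nat) (k : nat -> R) (rho alpha_s0 tau : R)
    (fs : R -> R) (x : R -> Config) : Prop :=
  forall i, (i < n)%nat ->
    cont_nonneg (fun t => vx (x t i)) /\ cont_nonneg (fun t => vy (x t i)) /\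
    cont_nonneg (fun t => vz (x t i)) /\
    forall l : nat, forall t, INR l * tau < t < INR (S l) * tau ->
      let alpha := fun m : nat =>
        INR m * PI / INR n + alpha_s0 * fs (pbar n rho (x (sample_time tau l))) in
      let v := closed_loop_rhs n N k alpha (x t) i in
      derivable_pt_lim (fun s => vx (x s i)) t (vx v) /\
      derivable_pt_lim (fun s => vy (x s i)) t (vy v) /\
      derivable_pt_lim (fun s => vz (x s i)) t (vz v).

Definition beta_n (n : nat) : R := sqrt (2 * (1 - cos (2 * PI / INR n))).
Definition gamma_m (n m : nat) : R := sin (INR m * PI / INR n) / sin (PI / INR n).
Definition Gamma_c (n N : nat) (k : nat -> R) : R := rsum1 (fun m => k m * gamma_m n m) N.
Definition C_c (n N : nat) (k : nat -> R) : R := 2 * beta_n n * Gamma_c n N k.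

(* A configuration in M_n is a horizontal regular polygon: the edges are successive rotations of the
   first one by -2 pi / n, their vertical components are equal and add up to zero around the polygon,
   so x_j = c + R_{-2 pi j / n} u with u horizontal.  All edges then have the same length, whence
   p_i = pbar.  The neighbours x_{j +- m} are c + R_{-+ 2 m pi / n} (x_j - c), and the closed loop
   collapses to  dx_j/dt = C sin(alpha_s) (x_j - c): every robot, hence every edge, is scaled at the
   common rate C sin(alpha_s).  The edge length therefore obeys the scalar linear ODE
   p' = C sin(alpha_s) (p - 1), which is integrated over each sampling interval. *)

From Stdlib Require Import Reals Lra Lia.
(* Imported after Reals so that [pos] is the robot position, not the projection of [posreal]. *)
Open Scope R_scope.

Lemma V3_ext u v : vx u = vx v -> vy u = vy v -> vz u = vz v -> u = v.
Proof. destruct u as [[? ?] ?], v as [[? ?] ?]; cbv; intros; subst; reflexivity. Qed.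

Ltac v3_components :=
  apply V3_ext; unfold rot, rotT, vadd, vsub, vscale, mkV, vx, vy, vz; simpl.

Lemma rot_rot a b v : rot a (rot b v) = rot (a + b) v.
Proof. v3_components; rewrite ?cos_plus, ?sin_plus; ring. Qed.

Lemma rot_0 v : rot 0 v = v.
Proof. v3_components; rewrite ?cos_0, ?sin_0; ring. Qed.

Lemma rot_period a (q : nat) v : rot (a + 2 * INR q * PI) v = rot a v.
Proof. v3_components; rewrite ?cos_period, ?sin_period; ring. Qed.

Lemma rot_vadd a u v : rot a (vadd u v) = vadd (rot a u) (rot a v).
Proof. v3_components; ring. Qed.

Lemma rot_vsub a u v : rot a (vsub u v) = vsub (rot a u) (rot a v).
Proof. v3_components; ring. Qed.

Lemma vz_rot a v : vz (rot a v) = vz v.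
Proof. reflexivity. Qed.

Lemma vnorm_rot a v : vnorm (rot a v) = vnorm v.
Proof.
  unfold vnorm; f_equal; unfold rot, mkV, vx, vy, vz; simpl.
  pose proof (sin2_cos2 a) as H; unfold Rsqr in H; nra.
Qed.

Lemma vadd_assoc u v w : vadd (vadd u v) w = vadd u (vadd v w).
Proof. v3_components; ring. Qed.

Lemma vsub_vadd2l c v w : vsub (vadd c v) (vadd c w) = vsub v w.
Proof. v3_components; ring. Qed.

(* With w = x_j - c and phi = m pi / n, the neighbours x_{j + m} and x_{j - m}
   are c + rot (-+ 2 phi) w. *)
Lemma rot_pair_planar phi s w : vz w = 0 ->
  vadd (rot (phi + s) (vsub w (rot (- (2 * phi)) w)))
       (rotT (phi + s) (vsub w (rot (2 * phi) w)))
  = vscale (-4 * sin phi * sin s) w.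
Proof.
  intro Hz; pose proof (sin2_cos2 phi) as H; unfold Rsqr in H; unfold vz in Hz.
  v3_components;
    rewrite ?cos_plus, ?sin_plus, ?cos_neg, ?sin_neg, ?cos_2a_sin, ?sin_2a;
    [ | | rewrite Hz; ring];
    match goal with |- _ = ?r =>
      transitivity (r * (sin phi * sin phi + cos phi * cos phi)); [ring | rewrite H; ring] end.
Qed.

Lemma sin_PI_div_pos n : (1 < n)%nat -> 0 < sin (PI / INR n).
Proof.
  intro Hn; pose proof PI_RGT_0.
  assert (Hn1 : 1 < INR n) by (apply lt_1_INR; exact Hn).
  apply sin_gt_0; [apply Rdiv_lt_0_compat; lra |].
  apply Rmult_lt_reg_r with (INR n); [lra |].
  unfold Rdiv; rewrite Rmult_assoc, Rinv_l by lra; nra.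
Qed.

Lemma cos_2PI_div_lt_1 n : (1 < n)%nat -> cos (2 * PI / INR n) < 1.
Proof.
  intro Hn; pose proof (sin_PI_div_pos n Hn) as Hs.
  assert (Hn0 : 0 < INR n) by (apply lt_0_INR; lia).
  replace (2 * PI / INR n) with (2 * (PI / INR n)) by (field; lra).
  rewrite cos_2a_sin; nra.
Qed.

(* u will be the offset from the centre to vertex 0 of the polygon with first edge d. *)
Lemma rot_sub_id_onto_plane th d : cos th < 1 -> vz d = 0 ->
  exists u, vz u = 0 /\ vadd u d = rot (- th) u.
Proof.
  destruct d as [[a b] z]; unfold vz; simpl; intros Hc ->.
  pose proof (sin2_cos2 th) as Hsc; unfold Rsqr in Hsc.
  exists (mkV (((cos th - 1) * a - sin th * b) / (2 - 2 * cos th))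
              ((sin th * a + (cos th - 1) * b) / (2 - 2 * cos th)) 0).
  split; [reflexivity |].
  v3_components; rewrite ?cos_neg, ?sin_neg; [apply Rminus_diag_uniq .. | ring].
  - transitivity (a * (1 - (sin th * sin th + cos th * cos th)) / (2 - 2 * cos th));
      [field; lra | rewrite Hsc; field; lra].
  - transitivity (b * (1 - (sin th * sin th + cos th * cos th)) / (2 - 2 * cos th));
      [field; lra | rewrite Hsc; field; lra].
Qed.

Lemma pos_small n y j : (j < n)%nat -> pos n y j = y j.
Proof. intro H; unfold pos; rewrite Nat.mod_small; auto. Qed.

Definition edge (n : nat) (y : Config) (j : nat) : V3 := vsub (pos n y (j + 1)) (pos n y j).

Definition regular_polygon (n : nat) (y : Config) (c u : V3) : Prop :=
  vz u = 0 /\ forall j, pos n y j = vadd c (rot (- (INR j * (2 * PI / INR n))) u).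

Section InMn.

Variables (n : nat) (y : Config).
Hypothesis Hn : (1 < n)%nat.
Hypothesis HM : in_Mn n y.

Lemma in_Mn_edge j : (j + 1 < n)%nat ->
  edge n y j = rot (- (INR j * (2 * PI / INR n))) (edge n y 0).
Proof.
  induction j as [| j IH]; intro Hj.
  - replace (- (INR 0 * (2 * PI / INR n))) with 0 by (simpl; ring); now rewrite rot_0.
  - assert (Hstep : edge n y (S j) = rot (- (2 * PI / INR n)) (edge n y j)).
    { unfold edge; rewrite (proj1 HM j) by lia; rewrite rot_rot, Rplus_opp_l, rot_0.
      f_equal; f_equal; lia. }
    rewrite Hstep, IH by lia; rewrite rot_rot, S_INR; f_equal; ring.
Qed.

Lemma in_Mn_edge_planar : vz (edge n y 0) = 0.
Proof.
  set (z0 := vz (edge n y 0)).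
  assert (Hz : forall j, (j < n)%nat -> vz (y j) = vz (y 0%nat) + INR j * z0).
  { induction j as [| j IH]; intro Hj; [simpl; ring |].
    assert (E := f_equal vz (in_Mn_edge j ltac:(lia))).
    rewrite vz_rot in E; fold z0 in E; unfold edge, vsub, vz, mkV in E; simpl in E.
    rewrite !pos_small in E by lia; rewrite Nat.add_1_r in E.
    rewrite S_INR; unfold vz in *; rewrite IH in E by lia; lra. }
  assert (Hclose := proj2 HM).
  unfold vsub, vz, mkV in Hclose; simpl in Hclose; rewrite !pos_small in Hclose by lia.
  change (vz (y (n - 1)%nat) - vz (y (n - 2)%nat) = vz (y 0%nat) - vz (y (n - 1)%nat)) in Hclose.
  rewrite (Hz (n - 1)%nat), (Hz (n - 2)%nat), !minus_INR in Hclose by lia; simpl in Hclose.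
  assert (Hn0 : 0 < INR n) by (apply lt_0_INR; lia).
  assert (Hnz0 : INR n * z0 = 0) by lra.
  destruct (Rmult_integral _ _ Hnz0); lra.
Qed.

Lemma in_Mn_regular_polygon : exists c u, regular_polygon n y c u.
Proof.
  set (th := 2 * PI / INR n).
  destruct (rot_sub_id_onto_plane th (edge n y 0)) as [u [Hu Hfix]];
    [apply cos_2PI_div_lt_1; lia | exact in_Mn_edge_planar |].
  exists (vsub (y 0%nat) u), u; split; [exact Hu |].
  assert (Hsmall : forall j, (j < n)%nat -> y j = vadd (vsub (y 0%nat) u) (rot (- (INR j * th)) u)).
  { induction j as [| j IH]; intro Hj.
    - replace (- (INR 0 * th)) with 0 by (simpl; ring); rewrite rot_0; v3_components; ring.
    - assert (Hy : y (S j) = vadd (y j) (edge n y j)).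
      { unfold edge; rewrite !pos_small, Nat.add_1_r by lia; v3_components; ring. }
      rewrite Hy, IH, in_Mn_edge by lia.
      rewrite vadd_assoc, <- rot_vadd, Hfix, rot_rot, S_INR; unfold th; do 2 f_equal; ring. }
  intro j; unfold pos at 1; rewrite Hsmall by (apply Nat.mod_upper_bound; lia).
  assert (Hn0 : 0 < INR n) by (apply lt_0_INR; lia).
  rewrite <- (rot_period (- (INR j * th)) (j / n)); do 2 f_equal.
  assert (Hj : INR j = INR n * INR (j / n) + INR (j mod n))
    by (rewrite <- mult_INR, <- plus_INR; f_equal; apply Nat.div_mod_eq).
  rewrite Hj; unfold th; field; lra.
Qed.

End InMn.

Lemma regular_polygon_edge n y c u i : regular_polygon n y c u ->
  vnorm (edge n y i) = vnorm (vsub (rot (- (2 * PI / INR n)) u) u).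
Proof.
  intros [_ Hp]; unfold edge; rewrite !Hp, vsub_vadd2l, plus_INR.
  replace (- ((INR i + INR 1) * (2 * PI / INR n)))
    with (- (INR i * (2 * PI / INR n)) + - (2 * PI / INR n)) by (simpl; ring).
  now rewrite <- rot_rot, <- rot_vsub, vnorm_rot.
Qed.

Lemma rsum0_const f K n : (forall i, f i = K) -> rsum0 f n = INR n * K.
Proof. intro H; induction n as [| n IH]; simpl rsum0; [simpl; ring |]; rewrite IH, H, S_INR; ring. Qed.

Lemma p_i_eq_pbar n rho y i : (1 < n)%nat -> in_Mn n y -> p_i n rho y i = pbar n rho y.
Proof.
  intros Hn HM; destruct (in_Mn_regular_polygon n y Hn HM) as [c [u Hpoly]].
  assert (Hp : forall j, p_i n rho y j = 1 - vnorm (vsub (rot (- (2 * PI / INR n)) u) u) / rho)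
    by (intro j; unfold p_i; fold (edge n y j); now rewrite (regular_polygon_edge n y c u j Hpoly)).
  assert (Hn0 : 0 < INR n) by (apply lt_0_INR; lia).
  unfold pbar; rewrite (rsum0_const _ _ _ Hp), Hp, <- Rmult_assoc, Rinv_l, Rmult_1_l by lra.
  reflexivity.
Qed.

Lemma rsum1_ext f g N : (forall m, (1 <= m <= N)%nat -> f m = g m) -> rsum1 f N = rsum1 g N.
Proof.
  induction N as [| N IH]; intro H; simpl; [reflexivity |].
  rewrite IH by (intros; apply H; lia); rewrite H by lia; reflexivity.
Qed.

Lemma rsum1_mulr f c N : rsum1 (fun m => f m * c) N = rsum1 f N * c.
Proof. induction N as [| N IH]; simpl; [ring | rewrite IH; ring]. Qed.

Lemma vsum1_ext f g N : (forall m, (1 <= m <= N)%nat -> f m = g m) -> vsum1 f N = vsum1 g N.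
Proof.
  induction N as [| N IH]; intro H; simpl; [reflexivity |].
  rewrite IH by (intros; apply H; lia); rewrite H by lia; reflexivity.
Qed.

Lemma vsum1_vscale f w N : vsum1 (fun m => vscale (f m) w) N = vscale (rsum1 f N) w.
Proof. induction N as [| N IH]; simpl; [| rewrite IH]; v3_components; ring. Qed.

Lemma beta_n_eq n : (1 < n)%nat -> beta_n n = 2 * sin (PI / INR n).
Proof.
  intro Hn; pose proof (sin_PI_div_pos n Hn).
  assert (Hn0 : 0 < INR n) by (apply lt_0_INR; lia).
  unfold beta_n; replace (2 * PI / INR n) with (2 * (PI / INR n)) by (field; lra).
  rewrite cos_2a_sin, <- sqrt_square by lra; f_equal; ring.
Qed.

Lemma C_c_eq n N k : (1 < n)%nat ->
  C_c n N k = 4 * rsum1 (fun m => k m * sin (INR m * PI / INR n)) N.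
Proof.
  intro Hn; pose proof (sin_PI_div_pos n Hn).
  unfold C_c, Gamma_c, gamma_m; rewrite beta_n_eq by exact Hn.
  rewrite (rsum1_ext _ (fun m => k m * sin (INR m * PI / INR n) * / sin (PI / INR n)))
    by (intros; unfold Rdiv; ring).
  rewrite rsum1_mulr; field; lra.
Qed.

Lemma closed_loop_rhs_regular_polygon n N k s y c u j :
  (1 < n)%nat -> (N < n)%nat -> regular_polygon n y c u ->
  closed_loop_rhs n N k (fun m => INR m * PI / INR n + s) y j
  = vscale (C_c n N k * sin s) (vsub (pos n y j) c).
Proof.
  intros Hn HN Hpoly; destruct Hpoly as [Hu Hp].
  assert (Hn0 : 0 < INR n) by (apply lt_0_INR; lia).
  set (w := rot (- (INR j * (2 * PI / INR n))) u).
  assert (Hw : vz w = 0) by (unfold w; rewrite vz_rot; exact Hu).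
  unfold closed_loop_rhs.
  rewrite (vsum1_ext _ (fun m => vscale (k m * sin (INR m * PI / INR n) * (-4 * sin s)) w)).
  - rewrite vsum1_vscale, rsum1_mulr, C_c_eq, Hp by exact Hn.
    fold w; v3_components; ring.
  - intros m Hm; rewrite !Hp, !vsub_vadd2l; fold w.
    replace (rot (- (INR (j + m) * (2 * PI / INR n))) u)
      with (rot (- (2 * (INR m * PI / INR n))) w)
      by (unfold w; rewrite rot_rot, plus_INR; f_equal; field; lra).
    replace (rot (- (INR (j + (n - m)) * (2 * PI / INR n))) u)
      with (rot (2 * (INR m * PI / INR n)) w).
    2: { unfold w; rewrite rot_rot; symmetry; rewrite <- (rot_period _ 1); f_equal.
         rewrite plus_INR, minus_INR by lia; simpl; field; lra. }
    rewrite rot_pair_planar by exact Hw; v3_components; ring.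
Qed.

Definition vderivable_pt_lim (F : R -> V3) (t : R) (v : V3) : Prop :=
  derivable_pt_lim (fun s => vx (F s)) t (vx v) /\
  derivable_pt_lim (fun s => vy (F s)) t (vy v) /\
  derivable_pt_lim (fun s => vz (F s)) t (vz v).

Definition vcontinuity_pt (F : R -> V3) (t : R) : Prop :=
  continuity_pt (fun s => vx (F s)) t /\
  continuity_pt (fun s => vy (F s)) t /\
  continuity_pt (fun s => vz (F s)) t.

Lemma vderivable_pt_lim_vsub F G t u v :
  vderivable_pt_lim F t u -> vderivable_pt_lim G t v ->
  vderivable_pt_lim (fun s => vsub (F s) (G s)) t (vsub u v).
Proof.
  intros (Fx & Fy & Fz) (Gx & Gy & Gz).
  exact (conj (derivable_pt_lim_minus _ _ _ _ _ Fx Gx)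
          (conj (derivable_pt_lim_minus _ _ _ _ _ Fy Gy)
                (derivable_pt_lim_minus _ _ _ _ _ Fz Gz))).
Qed.

Lemma vcontinuity_pt_vsub F G t :
  vcontinuity_pt F t -> vcontinuity_pt G t -> vcontinuity_pt (fun s => vsub (F s) (G s)) t.
Proof.
  intros (Fx & Fy & Fz) (Gx & Gy & Gz).
  exact (conj (continuity_pt_minus _ _ _ Fx Gx)
          (conj (continuity_pt_minus _ _ _ Fy Gy) (continuity_pt_minus _ _ _ Fz Gz))).
Qed.

Lemma sqrt_sum_sq_le_abs a b c : sqrt (a ^ 2 + b ^ 2 + c ^ 2) <= Rabs a + Rabs b + Rabs c.
Proof.
  pose proof (Rabs_pos a); pose proof (Rabs_pos b); pose proof (Rabs_pos c).
  rewrite <- (sqrt_square (Rabs a + Rabs b + Rabs c)) by lra.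
  apply sqrt_le_1_alt.
  rewrite <- (pow2_abs a), <- (pow2_abs b), <- (pow2_abs c); nra.
Qed.

Lemma derivable_pt_lim_vnorm_at_0 F t :
  F t = mkV 0 0 0 -> vderivable_pt_lim F t (mkV 0 0 0) ->
  derivable_pt_lim (fun s => vnorm (F s)) t 0.
Proof.
  intros HF0 (Dx & Dy & Dz) eps Heps.
  destruct (Dx (eps / 3) ltac:(lra)) as [dx Hx].
  destruct (Dy (eps / 3) ltac:(lra)) as [dy Hy].
  destruct (Dz (eps / 3) ltac:(lra)) as [dz Hz].
  assert (Hd : 0 < Rmin dx (Rmin dy dz)) by (repeat apply Rmin_pos; apply cond_pos).
  exists (mkposreal _ Hd); simpl; intros h Hh0 Hh.
  pose proof (Rmin_l dx (Rmin dy dz)); pose proof (Rmin_r dx (Rmin dy dz));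
    pose proof (Rmin_l dy dz); pose proof (Rmin_r dy dz).
  specialize (Hx h Hh0 ltac:(lra)); specialize (Hy h Hh0 ltac:(lra));
    specialize (Hz h Hh0 ltac:(lra)).
  rewrite HF0 in Hx, Hy, Hz |- *.
  change (vx (mkV 0 0 0)) with 0 in Hx; change (vy (mkV 0 0 0)) with 0 in Hy;
    change (vz (mkV 0 0 0)) with 0 in Hz.
  replace (vnorm (mkV 0 0 0)) with 0
    by (unfold vnorm; cbn [vx vy vz mkV fst snd];
        replace (0 ^ 2 + 0 ^ 2 + 0 ^ 2) with 0 by ring; symmetry; apply sqrt_0).
  unfold vnorm; rewrite !Rminus_0_r in *.
  unfold Rdiv in *; rewrite !Rabs_mult, !Rabs_inv in *.
  rewrite (Rabs_right (sqrt _)) by (apply Rle_ge, sqrt_pos).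
  pose proof (Rinv_0_lt_compat _ (Rabs_pos_lt h Hh0)).
  eapply Rle_lt_trans; [apply Rmult_le_compat_r; [lra | apply sqrt_sum_sq_le_abs] | nra].
Qed.

Lemma derivable_pt_lim_vnorm_radial F t lam :
  vderivable_pt_lim F t (vscale lam (F t)) ->
  derivable_pt_lim (fun s => vnorm (F s)) t (lam * vnorm (F t)).
Proof.
  intros (Dx & Dy & Dz); unfold vnorm.
  set (g := fun s => vx (F s) ^ 2 + vy (F s) ^ 2 + vz (F s) ^ 2).
  change (derivable_pt_lim (fun s => sqrt (g s)) t (lam * sqrt (g t))).
  destruct (Rle_lt_or_eq_dec 0 (g t)) as [Hpos | Hzero]; [unfold g; nra | |].
  - assert (Dg : derivable_pt_lim g t (2 * lam * g t)).
    { replace (2 * lam * g t) with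
        (INR 2 * vx (F t) ^ 1 * (lam * vx (F t)) + INR 2 * vy (F t) ^ 1 * (lam * vy (F t))
         + INR 2 * vz (F t) ^ 1 * (lam * vz (F t))) by (unfold g; simpl; ring).
      repeat apply derivable_pt_lim_plus; apply (derivable_pt_lim_comp _ (fun r => r ^ 2));
        auto; apply derivable_pt_lim_pow. }
    replace (lam * sqrt (g t)) with (/ (2 * sqrt (g t)) * (2 * lam * g t)).
    + exact (derivable_pt_lim_comp g sqrt t _ _ Dg (derivable_pt_lim_sqrt _ Hpos)).
    + pose proof (sqrt_lt_R0 _ Hpos).
      rewrite <- (sqrt_sqrt (g t)) at 2 by lra; field; lra.
  - assert (HF0 : F t = mkV 0 0 0).
    { unfold g in Hzero; apply V3_ext; cbn [vx vy vz mkV fst snd]; nra. }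
    rewrite <- Hzero, sqrt_0, Rmult_0_r.
    apply derivable_pt_lim_vnorm_at_0; [exact HF0 |].
    rewrite HF0 in Dx, Dy, Dz; cbn [vscale vx vy vz mkV fst snd] in Dx, Dy, Dz.
    rewrite Rmult_0_r in Dx, Dy, Dz; exact (conj Dx (conj Dy Dz)).
Qed.

Lemma continuity_pt_vnorm F t : vcontinuity_pt F t -> continuity_pt (fun s => vnorm (F s)) t.
Proof.
  intros (Cx & Cy & Cz); unfold vnorm.
  apply (continuity_pt_comp (fun s => vx (F s) ^ 2 + vy (F s) ^ 2 + vz (F s) ^ 2) sqrt).
  - repeat apply continuity_pt_plus; apply (continuity_pt_comp _ (fun r => r ^ 2)); auto;
      apply derivable_continuous_pt, derivable_pt_pow.
  - apply continuity_pt_sqrt; nra.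
Qed.

Lemma Rabs_Rmax0_sub_le s t : Rabs (Rmax 0 s - Rmax 0 t) <= Rabs (s - t).
Proof.
  unfold Rmax; destruct (Rle_dec 0 s), (Rle_dec 0 t); unfold Rabs;
    repeat destruct Rcase_abs; lra.
Qed.

(* Turns the one-sided continuity at 0 of [cont_nonneg] into the [continuity_pt] that
   [null_derivative_loc] requires. *)
Lemma cont_nonneg_Rmax0 f : cont_nonneg f -> continuity (fun s => f (Rmax 0 s)).
Proof.
  intros Hf t eps Heps.
  destruct (Hf _ (Rmax_l 0 t) eps Heps) as [d [Hd Hfd]].
  exists d; split; [exact Hd |]; intros s [_ Hs]; simpl in *; unfold R_dist in *.
  apply Hfd; [apply Rmax_l |].
  pose proof (Rabs_Rmax0_sub_le s t); lra.
Qed.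

Lemma affine_linear_ode_solution f K a b : a <= b ->
  (forall s, a <= s <= b -> continuity_pt f s) ->
  (forall s, a < s < b -> derivable_pt_lim f s (K * (f s - 1))) ->
  f b = (f a - 1) * exp (K * (b - a)) + 1.
Proof.
  intros Hab Cf Df.
  set (Q := fun s => (f s - 1) * exp (- (K * s))).
  assert (DQ : forall s, a < s < b -> derivable_pt_lim Q s 0).
  { intros s Hs.
    replace 0 with ((K * (f s - 1) - 0) * exp (- (K * s))
                    + (f s - 1) * (exp (- (K * s)) * - (0 * s + K * 1))) by ring.
    apply (derivable_pt_lim_mult (fun r => f r - 1) (fun r => exp (- (K * r)))).
    - apply (derivable_pt_lim_minus f (fun _ => 1)); [exact (Df s Hs) | apply derivable_pt_lim_const].
    - apply (derivable_pt_lim_comp (fun r => - (K * r)) exp); [| apply derivable_pt_lim_exp].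
      apply (derivable_pt_lim_opp (fun r => K * r)), (derivable_pt_lim_mult (fun _ => K) id);
        [apply derivable_pt_lim_const | apply derivable_pt_lim_id]. }
  assert (CQ : forall s, a <= s <= b -> continuity_pt Q s).
  { intros s Hs; apply (continuity_pt_mult (fun r => f r - 1) (fun r => exp (- (K * r)))).
    - apply (continuity_pt_minus f (fun _ => 1));
        [exact (Cf s Hs) | apply continuity_pt_const; intros ? ?; reflexivity].
    - apply derivable_continuous_pt, (derivable_pt_comp (fun r => - (K * r)) exp);
        [| apply derivable_pt_exp].
      apply (derivable_pt_opp (fun r => K * r)), (derivable_pt_mult (fun _ => K) id);
        [apply derivable_pt_const | apply derivable_pt_id]. }
  assert (HQ := null_derivative_loc Q a b (fun s Hs => exist _ 0 (DQ s Hs)) CQ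
                  (fun s Hs => derive_pt_eq_0 _ _ _ _ (DQ s Hs)) b (conj Hab (Rle_refl b))).
  unfold Q in HQ.
  replace (exp (K * (b - a))) with (exp (- (K * a)) * exp (K * b))
    by (rewrite <- exp_plus; f_equal; ring).
  rewrite <- Rmult_assoc, <- HQ, Rmult_assoc, <- exp_plus.
  replace (- (K * b) + K * b) with 0 by ring; rewrite exp_0; ring.
Qed.

Section ClosedLoop.

Variables (n N : nat) (k : nat -> R) (rho alpha_s0 tau : R) (fs : R -> R) (x : R -> Config).
Hypothesis Hn : (1 < n)%nat.
Hypothesis HNn : (N < n)%nat.
Hypothesis Htau : 0 < tau.
Hypothesis Hsol : hybrid_solution n N k rho alpha_s0 tau fs x.
Hypothesis HM : forall t, 0 <= t -> in_Mn n (x t).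

Let rate (l : nat) : R := C_c n N k * sin (alpha_s0 * fs (pbar n rho (x (sample_time tau l)))).

Lemma sample_time_nonneg l : 0 <= sample_time tau l.
Proof. destruct l; simpl; [lra | pose proof (pos_INR l); nra]. Qed.

(* c is the centre of the polygon at time t. *)
Lemma closed_loop_radial l t : INR l * tau < t < INR (S l) * tau ->
  exists c, forall j,
    vderivable_pt_lim (fun s => pos n (x s) j) t (vscale (rate l) (vsub (pos n (x t) j) c)).
Proof.
  intro Ht; assert (Ht0 : 0 <= t) by (pose proof (pos_INR l); nra).
  destruct (in_Mn_regular_polygon n (x t) Hn (HM t Ht0)) as [c [u Hpoly]].
  exists c; intro j.
  assert (Hj : (j mod n < n)%nat) by (apply Nat.mod_upper_bound; lia).
  destruct (Hsol _ Hj) as (_ & _ & _ & D); specialize (D l t Ht); cbv zeta in D.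
  rewrite (closed_loop_rhs_regular_polygon n N k _ (x t) c u) in D by (lia || exact Hpoly).
  rewrite pos_small in D by exact Hj; exact D.
Qed.

Lemma edge_vderivable l t i : INR l * tau < t < INR (S l) * tau ->
  vderivable_pt_lim (fun s => edge n (x s) i) t (vscale (rate l) (edge n (x t) i)).
Proof.
  intro Ht; destruct (closed_loop_radial l t Ht) as [c Hc].
  replace (vscale (rate l) (edge n (x t) i))
    with (vsub (vscale (rate l) (vsub (pos n (x t) (i + 1)) c))
               (vscale (rate l) (vsub (pos n (x t) i) c)))
    by (unfold edge; v3_components; ring).
  apply vderivable_pt_lim_vsub; apply Hc.
Qed.

Lemma p_i_derivable l t i : INR l * tau < t < INR (S l) * tau ->
  derivable_pt_lim (fun s => p_i n rho (x s) i) t (rate l * (p_i n rho (x t) i - 1)).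
Proof.
  intro Ht; unfold p_i; fold (edge n (x t) i).
  change (derivable_pt_lim (fun s => 1 - vnorm (edge n (x s) i) * / rho) t
            (rate l * (1 - vnorm (edge n (x t) i) * / rho - 1))).
  replace (rate l * (1 - vnorm (edge n (x t) i) * / rho - 1))
    with (0 - (rate l * vnorm (edge n (x t) i) * / rho + vnorm (edge n (x t) i) * 0)) by ring.
  apply (derivable_pt_lim_minus (fun _ => 1)); [apply derivable_pt_lim_const |].
  apply (derivable_pt_lim_mult (fun s => vnorm (edge n (x s) i)) (fun _ => / rho));
    [| apply derivable_pt_lim_const].
  exact (derivable_pt_lim_vnorm_radial _ _ _ (edge_vderivable l t i Ht)).
Qed.

Lemma p_i_Rmax0_continuous i : continuity (fun s => p_i n rho (x (Rmax 0 s)) i).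
Proof.
  assert (Cpos : forall j t, vcontinuity_pt (fun s => pos n (x (Rmax 0 s)) j) t).
  { intros j t; destruct (Hsol (j mod n)) as (Cx & Cy & Cz & _);
      [apply Nat.mod_upper_bound; lia |].
    exact (conj (cont_nonneg_Rmax0 _ Cx t)
                (conj (cont_nonneg_Rmax0 _ Cy t) (cont_nonneg_Rmax0 _ Cz t))). }
  intro t; unfold p_i.
  change (continuity_pt (fun s => 1 - vnorm (edge n (x (Rmax 0 s)) i) * / rho) t).
  apply (continuity_pt_minus (fun _ => 1)); [apply continuity_pt_const; intros ? ?; reflexivity |].
  apply (continuity_pt_mult (fun s => vnorm (edge n (x (Rmax 0 s)) i)) (fun _ => / rho));
    [| apply continuity_pt_const; intros ? ?; reflexivity].
  apply continuity_pt_vnorm, vcontinuity_pt_vsub; apply Cpos.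
Qed.

Lemma p_i_sampled_recurrence l i :
  p_i n rho (x (INR (S l) * tau)) i = (p_i n rho (x (INR l * tau)) i - 1) * exp (rate l * tau) + 1.
Proof.
  assert (Hl : 0 <= INR l * tau) by (pose proof (pos_INR l); nra).
  assert (Hlen : INR (S l) * tau - INR l * tau = tau) by (rewrite S_INR; ring).
  assert (E := affine_linear_ode_solution (fun s => p_i n rho (x (Rmax 0 s)) i) (rate l)
                 (INR l * tau) (INR (S l) * tau) ltac:(rewrite S_INR; lra)
                 (fun s _ => p_i_Rmax0_continuous i s)).
  rewrite Hlen, !Rmax_right in E by (rewrite ?S_INR; lra); apply E.
  intros s Hs; rewrite Rmax_right by lra.
  apply (derivable_pt_lim_locally_ext (fun r => p_i n rho (x r) i) _ s
           (INR l * tau) (INR (S l) * tau)); [exact Hs | | exact (p_i_derivable l s i Hs)].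
  intros z Hz; rewrite Rmax_right by lra; reflexivity.
Qed.

End ClosedLoop.

Theorem mainTheorem10 (n N : nat) (k : nat -> R) (rho alpha_s0 tau a : R)
  (fs : R -> R) (x : R -> Config)
  (Hn : (3 <= n)%nat)
  (Hrho : 0 < rho)
  (Hfs_cont : continuity fs)
  (Hfs_odd : forall p, fs (- p) = - fs p)
  (Hfs_sign : forall p, p <> 0 -> p * fs p > 0)
  (Hfs_bnd : forall p, Rabs (fs p) <= 1)
  (Ha : 0 < a)
  (Hfs_der : exists d, derivable_pt_lim fs 0 d /\ d > a)
  (Halpha : 0 < alpha_s0)
  (Htau : 0 < tau)
  (HN : (0 < N)%nat /\ (N < n - 1)%nat)
  (Hk : forall m, (1 <= m <= N)%nat -> 0 < k m)
  (Hsol : hybrid_solution n N k rho alpha_s0 tau fs x)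
  (HM : forall t, 0 <= t -> in_Mn n (x t)) :
  (forall t, 0 <= t -> forall i, (i < n)%nat -> p_i n rho (x t) i = pbar n rho (x t)) /\
  (forall (l : nat) t, INR l * tau < t < INR (S l) * tau -> forall i, (i < n)%nat ->
     derivable_pt_lim (fun s => p_i n rho (x s) i) t
       (C_c n N k * sin (alpha_s0 * fs (p_i n rho (x (sample_time tau l)) i))
        * (p_i n rho (x t) i - 1))) /\
  (forall (l : nat) i, (i < n)%nat ->
     p_i n rho (x (INR (S l) * tau)) i =
       (p_i n rho (x (INR l * tau)) i - 1)
       * exp (C_c n N k * sin (alpha_s0 * fs (p_i n rho (x (sample_time tau l)) i)) * tau)
       + 1).
Proof.
  assert (Hn1 : (1 < n)%nat) by lia.
  assert (HNn : (N < n)%nat) by lia.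
  assert (Hsample : forall l i,
            p_i n rho (x (sample_time tau l)) i = pbar n rho (x (sample_time tau l)))
    by (intros l i; apply p_i_eq_pbar, HM, sample_time_nonneg; assumption).
  split; [| split].
  - intros t Ht i _; apply p_i_eq_pbar, HM; assumption.
  - intros l t Ht i _; rewrite Hsample.
    exact (p_i_derivable n N k rho alpha_s0 tau fs x Hn1 HNn Htau Hsol HM l t i Ht).
  - intros l i _; rewrite Hsample.
    exact (p_i_sampled_recurrence n N k rho alpha_s0 tau fs x Hn1 HNn Htau Hsol HM l i).
Qed.
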